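(* Let $\mathbf z=(z_1,\dots,z_n)\in\bar\Sigma^n$, $\mathbf y=(y_1,\dots,y_n)\in\Sigma^n$ and $\mathbf r=(r_1,\dots,r_n)\in\{0,1\}^n$, and let $\mathbf z'$ be the result of the Rewrite-MDM transition, $z'_i=y_i$ if $r_i=1$ and $z'_i=z_i$ if $r_i=0$. Then there is a sequence of three AP-MDM steps $\mathbf z\to\mathbf u^{(1)}\to\mathbf u^{(2)}\to\mathbf u^{(3)}$ with $\mathbf u^{(3)}=\mathbf z'$; i.e., there exist token vectors $\mathbf y^{(j)}$ and control vectors $\mathbf c^{(j)}$ ($j=1,2,3$) of the appropriate lengths such that $\mathbf u^{(1)}=g(\mathbf z,\mathbf y^{(1)},\mathbf c^{(1)})$, $\mathbf u^{(2)}=g(\mathbf u^{(1)},\mathbf y^{(2)},\mathbf c^{(2)})$, $\mathbf u^{(3)}=g(\mathbf u^{(2)},\mathbf y^{(3)},\mathbf c^{(3)})=\mathbf z'$.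
   Context: Vocabulary $\Sigma$ with mask token $\mathsf M$, $\bar\Sigma=\Sigma\cup\{\mathsf M\}$. One AP-MDM step: given the current sequence $\mathbf x\in\bar\Sigma^m$, a mask-free token vector $\mathbf y\in\Sigma^m$ and control vector $\mathbf c\in(\{0,1\}^3)^m$, the next sequence is $g(\mathbf x,\mathbf y,\mathbf c)=(s_1,\dots,s_m)$ (concatenation of strings), where $s_i=\mathrm{insert}\circ\mathrm{delete}\circ\mathrm{remask}(y_i)$ with $\mathrm{remask}(y)=\mathsf M$ if $c_i[1]=1$, $=y$ if $x_i=\mathsf M$ and $c_i[1]=0$, $=x_i$ otherwise; $\mathrm{delete}(y)=\varepsilon$ (empty string) if $x_i=\mathsf M$ and $c_i[3]=1$, else $y$; $\mathrm{insert}(y)=(y,\mathsf M)$ if $c_i[2]=1$, else $y$. A Rewrite-MDM step, with binary rewrite signals $r_i$, replaces $z_i$ by $y_i$ when $r_i=1$ and keeps $z_i$ when $r_i=0$. *)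

From Stdlib Require Import List.
Import ListNotations.

(* Barred vocabulary: [None] is the mask token M, [Some a] is a token a of Sigma. *)
Definition bar (Sigma : Type) := option Sigma.
Definition Mask {Sigma : Type} : bar Sigma := None.

(* Control bits (c[1], c[2], c[3]) = (remask, insert, delete). *)
Record ctrl := Ctrl { c1 : bool; c2 : bool; c3 : bool }.

Definition ap_pos {Sigma : Type} (x : bar Sigma) (y : Sigma) (c : ctrl)
  : list (bar Sigma) :=
  let rm : bar Sigma :=
      if c1 c then Mask
      else match x with None => Some y | Some _ => x end in
  let dl : list (bar Sigma) :=
      match x with
      | None => if c3 c then [] else [rm]
      | Some _ => [rm]
      end in
  if c2 c then dl ++ [Mask] else dl.

(* One AP-MDM step g(x, y, c): concatenation of the s_i.  Used only when
   x, y, c all have the same length m. *)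
Fixpoint ap_step {Sigma : Type} (x : list (bar Sigma)) (y : list Sigma)
  (c : list ctrl) : list (bar Sigma) :=
  match x, y, c with
  | xi :: x', yi :: y', ci :: c' => ap_pos xi yi ci ++ ap_step x' y' c'
  | _, _, _ => []
  end.

Definition ap_transition {Sigma : Type} (x u : list (bar Sigma)) : Prop :=
  exists (y : list Sigma) (c : list ctrl),
    length y = length x /\ length c = length x /\ u = ap_step x y c.

Fixpoint rewrite_step {Sigma : Type} (z : list (bar Sigma)) (y : list Sigma)
  (r : list bool) : list (bar Sigma) :=
  match z, y, r with
  | zi :: z', yi :: y', ri :: r' =>
      (if ri then Some yi else zi) :: rewrite_step z' y' r'
  | _, _, _ => []
  end.

(* A token can only be rewritten by first remasking it and then unmasking it,
   so two AP-MDM steps suffice: the first remasks every position with r_i = 1,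
   the second unmasks exactly these positions to y_i.  Since an AP-MDM step
   unmasks every mask whose remask bit is off, masks that must survive a step
   are remasked.  The third step changes nothing. *)
From Stdlib Require Import List PeanoNat.

Lemma length_map_combine {A B C : Type} (f : A * B -> C) (a : list A) (b : list B) :
  length b = length a -> length (map f (combine a b)) = length a.
Proof. intros Hb. rewrite length_map, length_combine, Hb. apply Nat.min_id. Qed.

Section SubstitutionSteps.

Context {S : Type}.

Definition is_mask (x : bar S) : bool :=
  match x with None => true | Some _ => false end.

Definition subst_ctrl (remask : bool) : ctrl := Ctrl remask false false.

Lemma ap_transition_intro (x u : list (bar S)) (y : list S) (c : list ctrl) :
  length y = length x -> length c = length x -> ap_step x y c = u ->
  ap_transition x u.
Proof. intros Hy Hc <-. exists y, c. auto. Qed.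

Lemma ap_step_idle (x : list (bar S)) (y : list S) :
  length y = length x -> ap_step x y (map (fun xi => subst_ctrl (is_mask xi)) x) = x.
Proof.
  revert y; induction x as [|xi x IH]; intros [|yi y] Hlen; try discriminate; auto.
  simpl; rewrite IH by auto. destruct xi; reflexivity.
Qed.

Lemma ap_transition_refl (x : list (bar S)) (y : list S) :
  length y = length x -> ap_transition x x.
Proof.
  intros Hy. apply ap_transition_intro with y (map (fun xi => subst_ctrl (is_mask xi)) x).
  - exact Hy.
  - apply length_map.
  - apply ap_step_idle, Hy.
Qed.

Definition mask_where (z : list (bar S)) (r : list bool) : list (bar S) :=
  map (fun '((zi, ri) : bar S * bool) => if ri then Mask else zi) (combine z r).

Definition mask_ctrls (z : list (bar S)) (r : list bool) : list ctrl :=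
  map (fun '((zi, ri) : bar S * bool) => subst_ctrl (ri || is_mask zi)) (combine z r).

Definition unmask_ctrls (z : list (bar S)) (r : list bool) : list ctrl :=
  map (fun '((zi, ri) : bar S * bool) => subst_ctrl (negb ri && is_mask zi)) (combine z r).

Lemma ap_step_mask_where (z : list (bar S)) (y : list S) (r : list bool) :
  length y = length z -> ap_step z y (mask_ctrls z r) = mask_where z r.
Proof.
  unfold mask_ctrls, mask_where.
  revert y r; induction z as [|zi z IH]; intros [|yi y] [|ri r] Hlen;
    try discriminate; auto.
  simpl; rewrite IH by auto. destruct zi, ri; reflexivity.
Qed.

Lemma ap_step_unmask_where (z : list (bar S)) (y : list S) (r : list bool) :
  ap_step (mask_where z r) y (unmask_ctrls z r) = rewrite_step z y r.
Proof.
  unfold unmask_ctrls, mask_where.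
  revert y r; induction z as [|zi z IH]; intros [|yi y] [|ri r];
    try reflexivity.
  simpl; rewrite IH. destruct zi, ri; reflexivity.
Qed.

Lemma length_rewrite_step (z : list (bar S)) (y : list S) (r : list bool) :
  length y = length z -> length r = length z ->
  length (rewrite_step z y r) = length z.
Proof.
  revert y r; induction z as [|zi z IH]; intros [|yi y] [|ri r] Hy Hr;
    try discriminate; simpl; auto.
Qed.

End SubstitutionSteps.

Theorem mainTheorem5 (Sigma : Type) (n : nat) (z : list (bar Sigma))
  (y : list Sigma) (r : list bool) :
  length z = n -> length y = n -> length r = n ->
  exists u1 u2 u3 : list (bar Sigma),
    ap_transition z u1 /\ ap_transition u1 u2 /\ ap_transition u2 u3 /\
    u3 = rewrite_step z y r.
Proof.
  intros Hz Hy Hr; subst n.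
  assert (Hmask : length (mask_where z r) = length z)
    by (apply length_map_combine; congruence).
  exists (mask_where z r), (rewrite_step z y r), (rewrite_step z y r).
  split; [| split; [| split]].
  - apply ap_transition_intro with y (mask_ctrls z r).
    + congruence.
    + apply length_map_combine; congruence.
    + apply ap_step_mask_where; congruence.
  - apply ap_transition_intro with y (unmask_ctrls z r).
    + congruence.
    + rewrite Hmask; apply length_map_combine; congruence.
    + apply ap_step_unmask_where.
  - apply ap_transition_refl with y.
    rewrite length_rewrite_step; congruence.
  - reflexivity.
Qed.
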